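(* For every integer $n\geq 4$, the $2$-extra edge-connectivity of the $n$-dimensional augmented cube satisfies $\lambda_2(AQ_n)=6n-9$.
   Context: The $n$-dimensional augmented cube $AQ_n$ has vertex set $\{0,1\}^n$, vertices written as strings $X=x_nx_{n-1}\cdots x_1$. For $1\le i\le n$ let $X_i=x_n\cdots x_{i+1}\bar x_i x_{i-1}\cdots x_1$ (flip bit $i$) and $\overline{X}_i=x_n\cdots x_{i+1}\bar x_i\bar x_{i-1}\cdots\bar x_1$ (flip bits $i,i-1,\dots,1$), where $\bar x=1-x$. Two distinct vertices $X,Y$ are adjacent iff $Y=X_i$ for some $1\le i\le n$ or $Y=\overline{X}_i$ for some $2\le i\le n$. For a graph $G$ and integer $h\ge0$, an edge set $F\subseteq E(G)$ is an $h$-edge-cut if $G-F$ is disconnected and every component of $G-F$ has more than $h$ vertices; the $h$-extra edge-connectivity $\lambda_h(G)$ is the minimum cardinality of an $h$-edge-cut of $G$. *)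

From mathcomp Require Import all_boot.
Set Implicit Arguments. Unset Strict Implicit. Unset Printing Implicit Defensive.

(* Vertices of AQ_n: binary strings x_n ... x_1, encoded as functions
   'I_n -> bool; bit x_(k+1) is the value at the ordinal k. *)
Definition aq_vertex (n : nat) := {ffun 'I_n -> bool}.

(* X_i : flip bit i (here i is given as the ordinal i-1). *)
Definition flip1 n (X : aq_vertex n) (i : 'I_n) : aq_vertex n :=
  [ffun j : 'I_n => if j == i then ~~ X j else X j].

(* overline X_i : flip bits i, i-1, ..., 1 (ordinals 0 .. i-1). *)
Definition flipLow n (X : aq_vertex n) (i : 'I_n) : aq_vertex n :=
  [ffun j : 'I_n => if (j <= i)%N then ~~ X j else X j].

(* Adjacency in AQ_n: Y = X_i (1 <= i <= n) or Y = overline X_i (2 <= i <= n);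
   in ordinal terms, overline X uses ordinals i with 1 <= i. *)
Definition aq_adj n : rel (aq_vertex n) :=
  fun X Y => (X != Y) &&
    [exists i : 'I_n, (Y == flip1 X i) || ((1 <= i)%N && (Y == flipLow X i))].

Definition aq_edges n : {set {set aq_vertex n}} :=
  [set e | [exists X, exists Y, aq_adj X Y && (e == [set X; Y])]].

Definition adj_minus n (F : {set {set aq_vertex n}}) : rel (aq_vertex n) :=
  fun X Y => aq_adj X Y && ([set X; Y] \notin F).

Definition is_h_edge_cut (n : nat) (h : nat) (F : {set {set aq_vertex n}}) : Prop :=
  [/\ F \subset aq_edges n,
      exists X Y, ~~ connect (adj_minus F) X Y
    & forall X, (h < #|[set Y | connect (adj_minus F) X Y]|)%N ].

Definition extra_edge_conn_is (n : nat) (h m : nat) : Prop :=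
  (exists F, @is_h_edge_cut n h F /\ #|F| = m) /\
  (forall F, @is_h_edge_cut n h F -> (m <= #|F|)%N).

From mathcomp Require Import all_boot zify.
Set Implicit Arguments. Unset Strict Implicit. Unset Printing Implicit Defensive.

(* Write [dS] for the set of edges leaving a vertex set [S]. Every 2-edge-cut
   contains [dC] for a component [C] such that both [C] and its complement have
   at least three vertices, while [dT] for a triangle [T] is itself a 2-edge-cut,
   of size 3(2n - 3) = 6n - 9 because AQ_n is (2n - 1)-regular.
   For the lower bound, regularity gives |dS| >= |S|(2n - |S|). Splitting
   AQ_(n+1) along its top bit into two copies of AQ_n, joined by two perfect
   matchings (flip the top bit, or flip all bits), gives
   |dS| >= |dS_0| + |dS_1| + 2 ||S_0| - |S_1||, and an induction on n then shows
   |dS| >= 6n - 10 for n >= 3 and |dS| >= 6n - 9 for n >= 4 whenever S and its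
   complement both have at least three vertices. *)

(* Direction (i, false) leads to X_(i+1) and (i, true) to overline X_(i+1); the
   latter is excluded for i = 0, where it coincides with X_1. *)
Definition aq_dir_ok n (d : 'I_n * bool) : bool := ~~ d.2 || (0 < d.1)%N.

Definition aq_move n (X : aq_vertex n) (d : 'I_n * bool) : aq_vertex n :=
  if d.2 then flipLow X d.1 else flip1 X d.1.

Section Moves.
Variable n : nat.
Implicit Types (X Y : aq_vertex n) (d : 'I_n * bool).

Lemma aq_moveK d : involutive (fun X : aq_vertex n => aq_move X d).
Proof.
move=> X; apply/ffunP=> j; rewrite /aq_move; case: d.2; rewrite !ffunE.
  by case: (j <= d.1)%N; rewrite ?negbK.
by case: (j == d.1); rewrite ?negbK.
Qed.

Lemma aq_move_inj d : injective (fun X : aq_vertex n => aq_move X d).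
Proof. exact: can_inj (aq_moveK d). Qed.

Lemma aq_move_neq X d : aq_move X d != X.
Proof.
apply/eqP => /ffunP /(_ d.1); rewrite /aq_move.
by case: d.2; rewrite !ffunE ?eqxx ?leqnn; case: (X d.1).
Qed.

Lemma aq_move_dir_inj X d d' :
  aq_dir_ok d -> aq_dir_ok d' -> aq_move X d = aq_move X d' -> d = d'.
Proof.
case: d d' => [i b] [i' b']; rewrite /aq_dir_ok /aq_move /=.
have at_bit (k : 'I_n) (Y Z : aq_vertex n) : Y = Z -> Y k = Z k by move->.
(* flip1 X j changes one bit, flipLow X j' with j' >= 1 changes bits j' and j'-1 *)
have flip_neq (j j' : 'I_n) : (0 < j')%N -> flip1 X j <> flipLow X j'.
  move=> j'_gt0 E; have := at_bit j' _ _ E; rewrite !ffunE leqnn.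
  case: eqP => [ej|_]; last by case: (X j').
  have lt_pred : (j'.-1 < n)%N by have := ltn_ord j'; lia.
  have := at_bit (Ordinal lt_pred) _ _ E; rewrite !ffunE /= -val_eqE /= -ej.
  by rewrite (_ : (j'.-1 == j') = false) ?leq_pred; [case: (X _) | lia].
case: b; case: b' => /= ok ok' E.
- case: (ltngtP i i') => lt_ii'; last by congr (_, _); apply: val_inj.
  + have := at_bit i' _ _ E; rewrite !ffunE leqnn leqNgt lt_ii'.
    by case: (X i').
  + have := at_bit i _ _ E; rewrite !ffunE leqnn leqNgt lt_ii'.
    by case: (X i).
- by case: (flip_neq i' i ok (esym E)).
- by case: (flip_neq i i' ok' E).
- have := at_bit i _ _ E; rewrite !ffunE eqxx.
  by case: eqP => [->//|_]; case: (X i).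
Qed.

Lemma aq_adjE X Y : aq_adj X Y = [exists d, aq_dir_ok d && (Y == aq_move X d)].
Proof.
rewrite /aq_adj; apply/andP/existsP.
  case=> _ /existsP [i /orP [/eqP->|/andP [i_gt0 /eqP ->]]].
    by exists (i, false); rewrite /aq_move /= eqxx.
  by exists (i, true); rewrite /aq_dir_ok /aq_move /= i_gt0 eqxx.
case=> d /andP [ok /eqP ->]; split; first by rewrite eq_sym aq_move_neq.
apply/existsP; exists d.1; move: ok; rewrite /aq_move /aq_dir_ok.
by case: d.2 => /= ok; rewrite eqxx ?ok ?orbT.
Qed.

Lemma aq_adj_move X d : aq_dir_ok d -> aq_adj X (aq_move X d).
Proof. by move=> ok; rewrite aq_adjE; apply/existsP; exists d; rewrite ok eqxx. Qed.

Lemma aq_adj_sym : symmetric (@aq_adj n).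
Proof.
suff adj_sym X Y : aq_adj X Y -> aq_adj Y X by move=> X Y; apply/idP/idP; apply: adj_sym.
by rewrite aq_adjE => /existsP [d /andP [ok /eqP ->]]; rewrite -{2}(aq_moveK d X) aq_adj_move.
Qed.

Lemma aq_adj_neq X Y : aq_adj X Y -> X != Y.
Proof. by case/andP. Qed.

End Moves.

Lemma sum_nat_card (T : finType) (P : pred T) : \sum_(x : T) P x = #|P|.
Proof.
by rewrite -sum1_card [RHS]big_mkcond; apply: eq_bigr => x _; rewrite unfold_in; case: (P x).
Qed.

Definition edge_bd_dir n (S : {set aq_vertex n}) (d : 'I_n * bool) : nat :=
  \sum_(X : aq_vertex n) [&& aq_dir_ok d, X \in S & aq_move X d \notin S].

Definition edge_bd n (S : {set aq_vertex n}) : nat := \sum_(d : 'I_n * bool) edge_bd_dir S d.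

Definition aq_nbrs n (X : aq_vertex n) : {set aq_vertex n} :=
  [set aq_move X d | d in @aq_dir_ok n].

Definition aq_clique n (T : {set aq_vertex n}) : Prop :=
  {in T &, forall X Y, X != Y -> aq_adj X Y}.

Section Boundary.
Variable n : nat.
Implicit Types (X Y : aq_vertex n) (S : {set aq_vertex n}).

Lemma card_aq_vertex : #|aq_vertex n| = 2 ^ n.
Proof. by rewrite card_ffun card_bool card_ord. Qed.

Lemma edge_bdC S : edge_bd (~: S) = edge_bd S.
Proof.
apply: eq_bigr => d _; rewrite /edge_bd_dir (reindex_inj (@aq_move_inj n d)).
apply: eq_bigr => X _; rewrite aq_moveK !inE negbK.
by case: (aq_dir_ok d); case: (X \in S); case: (aq_move X d \in S).
Qed.

Lemma in_aq_nbrs X Y : (Y \in aq_nbrs X) = aq_adj X Y.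
Proof.
rewrite aq_adjE; apply/imsetP/existsP.
  by case=> d ok ->; exists d; rewrite eqxx andbT.
by case=> d /andP [ok /eqP ->]; exists d.
Qed.

Lemma aq_nbrs_notin X : X \notin aq_nbrs X.
Proof. by rewrite in_aq_nbrs; apply/negP => /aq_adj_neq; rewrite eqxx. Qed.

Lemma card_aq_nbrs X : (0 < n)%N -> #|aq_nbrs X| = 2 * n - 1.
Proof.
move=> n_gt0; rewrite card_in_imset => [|d d' ok ok']; last exact: aq_move_dir_inj.
have okE : @aq_dir_ok n =i predC1 (Ordinal n_gt0, true).
  case=> i b; rewrite unfold_in !inE /aq_dir_ok xpair_eqE -val_eqE /=.
  by case: b; case: (nat_of_ord i).
by rewrite (eq_card okE) cardC1 card_prod card_ord card_bool; lia.
Qed.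

Lemma edge_bdE S : edge_bd S = \sum_(X in S) #|aq_nbrs X :\: S|.
Proof.
rewrite /edge_bd /edge_bd_dir exchange_big [RHS]big_mkcond /=; apply: eq_bigr => X _.
case: (X \in S); last by rewrite big1 // => d _; rewrite andbF.
pose out := [pred d | aq_dir_ok d && (aq_move X d \notin S)].
rewrite /= (sum_nat_card out) -(card_in_imset (f := aq_move X)) => [|d d']; last first.
  by rewrite !inE => /andP [ok _] /andP [ok' _]; apply: aq_move_dir_inj.
apply: eq_card => Y; rewrite !inE; apply/imsetP/andP.
  by case=> d /andP [ok YS] ->; split; last apply/imsetP; [|exists d].
by case=> YS /imsetP [d ok EY]; exists d; rewrite // inE -EY YS andbT.
Qed.

Lemma card_aq_nbrs_out X S : (0 < n)%N ->
  #|aq_nbrs X :\: S| = 2 * n - 1 - #|aq_nbrs X :&: S|.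
Proof. by move=> n_gt0; rewrite -(card_aq_nbrs X n_gt0) -(cardsID S (aq_nbrs X)); lia. Qed.

Lemma edge_bd_ge S : (0 < n)%N -> #|S| * (2 * n - #|S|) <= edge_bd S.
Proof.
move=> n_gt0; rewrite edge_bdE -sum_nat_const; apply: leq_sum => X XS.
have : #|aq_nbrs X :&: S| <= #|S :\ X|.
  apply/subset_leq_card/subsetP => Y; rewrite !inE => /andP [XY ->].
  by rewrite andbT; apply: contraTneq XY => ->; apply: aq_nbrs_notin.
by rewrite card_aq_nbrs_out // (cardsD1 X S) XS; lia.
Qed.

Lemma edge_bd_clique S : aq_clique S -> (0 < n)%N ->
  edge_bd S = #|S| * (2 * n - #|S|).
Proof.
move=> clique n_gt0; rewrite edge_bdE -sum_nat_const; apply: eq_bigr => X XS.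
rewrite card_aq_nbrs_out //.
have -> : aq_nbrs X :&: S = S :\ X.
  apply/setP => Y; rewrite !inE in_aq_nbrs; case: (boolP (Y \in S)) => YS; last by rewrite !andbF.
  by rewrite !andbT; apply/idP/idP => [/aq_adj_neq|]; rewrite eq_sym //; apply: clique.
by rewrite (cardsD1 X S) XS; lia.
Qed.

End Boundary.

Definition aq_cons n (b : bool) (Y : aq_vertex n) : aq_vertex n.+1 :=
  [ffun j => if unlift ord_max j is Some k then Y k else b].

Definition aq_compl n (Y : aq_vertex n) : aq_vertex n := [ffun k => ~~ Y k].

Definition aq_slice n (S : {set aq_vertex n.+1}) (b : bool) : {set aq_vertex n} :=
  [set Y | aq_cons b Y \in S].

Section Slices.
Variable n : nat.
Implicit Types (Y : aq_vertex n) (X : aq_vertex n.+1) (S : {set aq_vertex n.+1}).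

Lemma lift_ord_max (k : 'I_n) : lift ord_max k = k :> nat.
Proof. exact: lift_max. Qed.

Lemma aq_cons_max b Y : aq_cons b Y ord_max = b.
Proof. by rewrite ffunE unlift_none. Qed.

Lemma aq_cons_lift b Y k : aq_cons b Y (lift ord_max k) = Y k.
Proof. by rewrite ffunE liftK. Qed.

Lemma aq_consK X : aq_cons (X ord_max) [ffun k => X (lift ord_max k)] = X.
Proof.
by apply/ffunP => j; rewrite ffunE; case: unliftP => [k ->|->]; rewrite ?ffunE.
Qed.

Lemma aq_compl_inj : injective (@aq_compl n).
Proof. by move=> Y Y' /ffunP E; apply/ffunP => k; have := E k; rewrite !ffunE => /negb_inj. Qed.

Lemma aq_move_cons_lift b Y k c :
  aq_move (aq_cons b Y) (lift ord_max k, c) = aq_cons b (aq_move Y (k, c)).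
Proof.
apply/ffunP => j; rewrite /aq_move /=; case: (unliftP ord_max j) => [k' ->|->].
  by case: c; rewrite !ffunE liftK !ffunE ?(inj_eq (@lift_inj _ _)) ?lift_max.
by case: c; rewrite !ffunE unlift_none ?(negbTE (neq_lift _ _)) // lift_ord_max leqNgt ltn_ord.
Qed.

Lemma aq_move_cons_max b Y c :
  aq_move (aq_cons b Y) (ord_max, c) = aq_cons (~~ b) (if c then aq_compl Y else Y).
Proof.
apply/ffunP => j; rewrite /aq_move /=; case: (unliftP ord_max j) => [k ->|->].
  by case: c; rewrite !ffunE ?liftK ?leq_ord ?ffunE // eq_sym (negbTE (neq_lift _ _)).
by case: c; rewrite !ffunE ?unlift_none ?leqnn ?eqxx.
Qed.

Lemma sum_aq_cons (F : aq_vertex n.+1 -> nat) :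
  \sum_X F X = \sum_(b : bool) \sum_Y F (aq_cons b Y).
Proof.
rewrite pair_bigA /= (reindex (fun p : bool * aq_vertex n => aq_cons p.1 p.2)) //.
exists (fun X => (X ord_max, [ffun k => X (lift ord_max k)])) => [[b Y]|X] _ /=.
  by rewrite aq_cons_max; congr (_, _); apply/ffunP => k; rewrite ffunE aq_cons_lift.
exact: aq_consK.
Qed.

Lemma card_aq_slices S : #|S| = #|aq_slice S false| + #|aq_slice S true|.
Proof.
rewrite -!sum1_card big_mkcond sum_aq_cons big_bool /= addnC.
by congr (_ + _); rewrite [RHS]big_mkcond; apply: eq_bigr => Y _; rewrite inE.
Qed.

Lemma edge_bd_dir_lift S k c :
  edge_bd_dir S (lift ord_max k, c) =
  edge_bd_dir (aq_slice S false) (k, c) + edge_bd_dir (aq_slice S true) (k, c).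
Proof.
rewrite /edge_bd_dir sum_aq_cons big_bool addnC; congr (_ + _); apply: eq_bigr => Y _;
  by rewrite aq_move_cons_lift !inE /aq_dir_ok /= -[bump n k]/(lift ord_max k : nat) lift_ord_max.
Qed.

End Slices.

Lemma card_sub_le_count (T : finType) (f : T -> T) (A B : {set T}) : injective f ->
  #|A| - #|B| <= \sum_(x : T) ((x \in A) && (f x \notin B)).
Proof.
move=> f_inj; rewrite leq_subLR -(card_preimset B f_inj) -!sum1_card !big_mkcond.
rewrite [X in _ <= X + _]big_mkcond -big_split /=.
by apply: leq_sum => x _; rewrite !inE; case: (x \in A); case: (f x \in B).
Qed.

Lemma edge_bd_pair n (S : {set aq_vertex n}) :
  edge_bd S = \sum_(i < n) \sum_(c : bool) edge_bd_dir S (i, c).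
Proof. by rewrite pair_bigA; apply: eq_bigr => -[i c]. Qed.

Lemma edge_bd_dir_max n (S : {set aq_vertex n.+1}) c : (0 < n)%N ->
  (#|aq_slice S false| - #|aq_slice S true|) + (#|aq_slice S true| - #|aq_slice S false|)
  <= edge_bd_dir S (ord_max, c).
Proof.
move=> n_gt0; pose g (Y : aq_vertex n) := if c then aq_compl Y else Y.
have g_inj : injective g by rewrite /g; case: (c) => //; exact: aq_compl_inj.
rewrite /edge_bd_dir sum_aq_cons big_bool addnC.
apply: leq_add; apply: leq_trans (card_sub_le_count _ _ g_inj) _; apply/eq_leq/eq_bigr => Y _;
  by rewrite aq_move_cons_max !inE /aq_dir_ok /= n_gt0 orbT.
Qed.

Lemma edge_bd_slices n (S : {set aq_vertex n.+1}) : (0 < n)%N ->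
  edge_bd (aq_slice S false) + edge_bd (aq_slice S true)
  + 2 * ((#|aq_slice S false| - #|aq_slice S true|) + (#|aq_slice S true| - #|aq_slice S false|))
  <= edge_bd S.
Proof.
move=> n_gt0; rewrite !edge_bd_pair (bigD1_ord ord_max) //= addnC leq_add //.
  by rewrite big_bool mul2n -addnn leq_add ?edge_bd_dir_max.
under [X in _ <= X]eq_bigr => k _ do
  rewrite (eq_bigr _ (fun c _ => edge_bd_dir_lift S k c)) big_split.
by rewrite big_split.
Qed.

Lemma edge_bd_ge_min n (S : {set aq_vertex n}) : (0 < n)%N ->
  let m := minn #|S| #|~: S| in m * (2 * n - m) <= edge_bd S.
Proof.
by move=> n_gt0 /=; rewrite /minn; case: ltnP => _; [|rewrite -(edge_bdC S)]; apply: edge_bd_ge.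
Qed.

Lemma card_aq_setC n (S : {set aq_vertex n}) : #|S| + #|~: S| = 2 ^ n.
Proof. by rewrite cardsC card_aq_vertex. Qed.

Lemma leq_6n_exp2 n : (3 <= n)%N -> 6 * n <= 2 * 2 ^ n + 3.
Proof.
elim: n => // n IH n_ge3; rewrite expnS; case: (leqP n 2) => n_le2.
  by have -> : n = 2 by lia.
by have := IH n_le2; lia.
Qed.

Section Induction.
Variable n : nat.
Hypothesis n_ge3 : (3 <= n)%N.
Hypothesis IH : forall T : {set aq_vertex n},
  (2 < minn #|T| #|~: T|)%N -> 6 * n - 10 <= edge_bd T.

Lemma edge_bd_profile (T : {set aq_vertex n}) :
  let m := minn #|T| #|~: T| in let b := edge_bd T in
  m = 0 \/ (m = 1 /\ 2 * n - 1 <= b) \/ (m = 2 /\ 2 * (2 * n - 2) <= b) \/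
  (m = 3 /\ 3 * (2 * n - 3) <= b) \/ (3 < m /\ 6 * n - 10 <= b).
Proof.
move=> m b; have := @edge_bd_ge_min n T (ltnW (ltnW n_ge3)); rewrite /= -/m -/b.
case: (ltnP 3 m) => [m_gt3 _|]; first by do 4 right; split => //; apply/IH/ltnW.
by clearbody m b; case: m => [|[|[|[|]]]] //= _; lia.
Qed.

Lemma edge_bd_step (S : {set aq_vertex n.+1}) :
  (2 < minn #|S| #|~: S|)%N -> 6 * n.+1 - 9 <= edge_bd S.
Proof.
move=> thick; have := edge_bd_slices S (ltnW (ltnW n_ge3)).
have := card_aq_slices S; have := card_aq_setC S; rewrite expnS.
have := card_aq_setC (aq_slice S false); have := card_aq_setC (aq_slice S true).
have := edge_bd_profile (aq_slice S false); have := edge_bd_profile (aq_slice S true).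
have := leq_6n_exp2 n_ge3; have : 2 ^ 3 <= 2 ^ n by rewrite leq_exp2l.
rewrite /=; move: thick.
move: #|S| #|~: S| (edge_bd S) (#|aq_slice S false|) (#|~: aq_slice S false|)
  (edge_bd (aq_slice S false)) (#|aq_slice S true|) (#|~: aq_slice S true|)
  (edge_bd (aq_slice S true)) (2 ^ n) => s s' b s0 s0' b0 s1 s1' b1 N.
lia.
Qed.

End Induction.

Lemma edge_bd_thick_weak n (S : {set aq_vertex n}) : (3 <= n)%N ->
  (2 < minn #|S| #|~: S|)%N -> 6 * n - 10 <= edge_bd S.
Proof.
elim: n S => // n IH S n_ge3 thick; case: (ltnP n 3) => n_lt3; last first.
  by have := edge_bd_step n_lt3 (fun T => IH T n_lt3) thick; lia.
have n_eq2 : n = 2 by lia.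
clear IH n_ge3 n_lt3; subst n; have := edge_bd_ge_min S isT.
have [->|->] : minn #|S| #|~: S| = 3 \/ minn #|S| #|~: S| = 4.
  by move: thick (card_aq_setC S) => /=; lia.
all: by rewrite /=; lia.
Qed.

Lemma edge_bd_thick n (S : {set aq_vertex n}) : (4 <= n)%N ->
  (2 < minn #|S| #|~: S|)%N -> 6 * n - 9 <= edge_bd S.
Proof.
case: n S => // n S n_ge4; apply: edge_bd_step => // T; exact: edge_bd_thick_weak.
Qed.

Definition bd_pairs n (S : {set aq_vertex n}) : {set aq_vertex n * ('I_n * bool)} :=
  [set p | [&& aq_dir_ok p.2, p.1 \in S & aq_move p.1 p.2 \notin S]].

Definition bd_edges n (S : {set aq_vertex n}) : {set {set aq_vertex n}} :=
  [set [set p.1; aq_move p.1 p.2] | p in bd_pairs S].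

Section BoundaryEdges.
Variable n : nat.
Implicit Types (X Y : aq_vertex n) (S : {set aq_vertex n}) (F : {set {set aq_vertex n}}).

Lemma card_bd_edges S : #|bd_edges S| = edge_bd S.
Proof.
rewrite card_in_imset => [|[X d] [X' d']]; last first.
  rewrite !inE /= => /and3P [ok XS YS] /and3P [ok' X'S Y'S] E.
  have eX : X = X'.
    have : X \in [set X'; aq_move X' d'] by rewrite -E set21.
    by rewrite !inE => /orP [/eqP //|/eqP eX]; move: Y'S; rewrite -eX XS.
  subst X'; have : aq_move X d \in [set X; aq_move X d'] by rewrite -E set22.
  rewrite !inE => /orP [/eqP eY|/eqP eY]; first by move: YS; rewrite eY XS.
  by rewrite (aq_move_dir_inj ok ok' eY).
rewrite /edge_bd /edge_bd_dir exchange_big pair_bigA -sum1_card big_mkcond /=.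
by apply: eq_bigr => -[X d] _; rewrite inE; case: [&& _, _ & _].
Qed.

Lemma bd_edgesP S e : e \in bd_edges S ->
  exists X Y, [/\ aq_adj X Y, X \in S, Y \notin S & e = [set X; Y]].
Proof.
case/imsetP => -[X d]; rewrite inE /= => /and3P [ok XS YS] ->.
by exists X, (aq_move X d); split => //; apply: aq_adj_move.
Qed.

Lemma bd_edges_sub S : bd_edges S \subset aq_edges n.
Proof.
apply/subsetP => e /bd_edgesP [X [Y [XY _ _ ->]]].
by rewrite inE; apply/existsP; exists X; apply/existsP; exists Y; rewrite XY eqxx.
Qed.

Lemma mem_bd_edges S X Y : aq_adj X Y ->
  ([set X; Y] \in bd_edges S) = (X \in S) (+) (Y \in S).
Proof.
move=> XY; apply/idP/idP.
  case/bd_edgesP => X' [Y' [_ X'S Y'S E]].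
  have /set2P X'_XY : X' \in [set X; Y] by rewrite E set21.
  have /set2P Y'_XY : Y' \in [set X; Y] by rewrite E set22.
  by move: X'S Y'S; case: X'_XY Y'_XY => -> [] ->; case: (X \in S); case: (Y \in S).
have out_edge X' Y' : aq_adj X' Y' -> X' \in S -> Y' \notin S -> [set X'; Y'] \in bd_edges S.
  rewrite aq_adjE => /existsP [d /andP [ok /eqP ->]] X'S Y'S.
  by apply/imsetP; exists (X', d); rewrite ?inE /= ?ok ?X'S.
case: (boolP (X \in S)) => XS /= YS; first exact: out_edge.
by rewrite setUC; apply: out_edge; rewrite // aq_adj_sym.
Qed.

Lemma adj_minus_bd_edges S X Y :
  adj_minus (bd_edges S) X Y = aq_adj X Y && ((X \in S) == (Y \in S)).
Proof.
rewrite /adj_minus; case: (boolP (aq_adj X Y)) => //= XY.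
by rewrite mem_bd_edges //; case: (X \in S); case: (Y \in S).
Qed.

End BoundaryEdges.

Lemma adj_minus_sym n (F : {set {set aq_vertex n}}) : symmetric (adj_minus F).
Proof. by move=> X Y; rewrite /adj_minus aq_adj_sym setUC. Qed.

Lemma bd_edges_component_sub n (F : {set {set aq_vertex n}}) X :
  bd_edges [set Y | connect (adj_minus F) X Y] \subset F.
Proof.
apply/subsetP => e /bd_edgesP [Y [Z [YZ]]]; rewrite !inE => XY XZ ->.
by apply: contraNT XZ => YZ_F; apply: connect_trans XY (connect1 _); apply/andP.
Qed.

Lemma cut_card_ge n (F : {set {set aq_vertex n}}) :
  (4 <= n)%N -> is_h_edge_cut 2 F -> 6 * n - 9 <= #|F|.
Proof.
move=> n_ge4 [_ [X [Y notXY]] big_comp].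
pose C := [set Z | connect (adj_minus F) X Z].
have thick : (2 < minn #|C| #|~: C|)%N.
  rewrite leq_min big_comp /=; apply: leq_trans (big_comp Y) (subset_leq_card _).
  apply/subsetP => Z; rewrite !inE => YZ; apply: contra notXY => XZ.
  by apply: connect_trans XZ _; rewrite (sym_connect_sym (@adj_minus_sym n F)).
apply: leq_trans (edge_bd_thick n_ge4 thick) _.
by rewrite -card_bd_edges; apply/subset_leq_card/bd_edges_component_sub.
Qed.

Lemma aq_triangle n : (1 < n)%N -> exists2 T : {set aq_vertex n}, #|T| = 3 & aq_clique T.
Proof.
move=> n_gt1; pose i0 := Ordinal (ltnW n_gt1); pose i1 := Ordinal n_gt1.
pose A : aq_vertex n := [ffun _ => false].
pose B := flip1 A i0; pose C := flipLow A i1.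
have AB : aq_adj A B by exact: (@aq_adj_move n A (i0, false)).
have AC : aq_adj A C by exact: (@aq_adj_move n A (i1, true)).
have BC : aq_adj B C.
  rewrite (_ : C = aq_move B (i1, false)) ?aq_adj_move //.
  by apply/ffunP => j; rewrite !ffunE -!val_eqE /=; case: (nat_of_ord j) => [|[]].
exists (A |: [set B; C]).
  rewrite cardsU1 cards2 !inE (aq_adj_neq BC).
  by rewrite (negbTE (aq_adj_neq AB)) (negbTE (aq_adj_neq AC)).
move=> X Y; rewrite !inE => /or3P [] /eqP -> /or3P [] /eqP -> //; rewrite ?eqxx //;
  by rewrite ?AB ?AC ?BC // aq_adj_sym ?AB ?AC ?BC.
Qed.

Lemma bd_edges_clique_cut n h (T : {set aq_vertex n}) : aq_clique T ->
  (h < #|T|)%N -> (h + #|T| < 2 * n)%N -> (#|T| < 2 ^ n)%N -> is_h_edge_cut h (bd_edges T).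
Proof.
move=> clique h_lt_T h_lt_out T_lt.
have n_gt0 : (0 < n)%N by lia.
have T_closed : closed (adj_minus (bd_edges T)) T.
  by move=> X Y; rewrite adj_minus_bd_edges => /andP [_ /eqP].
split; first exact: bd_edges_sub.
- have [X XT] : exists X, X \in T by apply/set0Pn; rewrite -card_gt0; lia.
  have [Y YT] : exists Y, Y \in ~: T.
    by apply/set0Pn; rewrite -card_gt0; have := card_aq_setC T; lia.
  exists X, Y; apply/negP => /(closed_connect T_closed).
  by rewrite inE in YT; rewrite XT (negbTE YT).
move=> X; case: (boolP (X \in T)) => XT.
  apply: leq_trans h_lt_T (subset_leq_card _); apply/subsetP => Y YT; rewrite inE.
  case: (eqVneq X Y) => [->|XY]; first exact: connect0.
  by apply: connect1; rewrite adj_minus_bd_edges clique ?XT ?YT.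
have comp_sub : X |: (aq_nbrs X :\: T) \subset [set Y | connect (adj_minus (bd_edges T)) X Y].
  apply/subsetP => Y; rewrite in_setU1 in_setD inE => /predU1P [->|/andP [YT XY]].
    exact: connect0.
  by apply: connect1; rewrite adj_minus_bd_edges -in_aq_nbrs XY (negbTE XT) (negbTE YT).
apply: leq_trans (subset_leq_card comp_sub).
rewrite cardsU1 in_setD (negbTE (aq_nbrs_notin X)) andbF.
rewrite card_aq_nbrs_out //; have := subset_leq_card (subsetIr (aq_nbrs X) T); lia.
Qed.

Theorem theorem3p2 (n : nat) : (4 <= n)%N -> extra_edge_conn_is n 2 (6 * n - 9).
Proof.
move=> n_ge4; split; last by move=> F; apply: cut_card_ge.
have [T card_T clique_T] := @aq_triangle n (ltnW (ltnW n_ge4)).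
exists (bd_edges T); split.
  apply: bd_edges_clique_cut; rewrite ?card_T //; first lia.
  exact: leq_ltn_trans (ltnW n_ge4) (ltn_expl n (isT : 1 < 2)).
by rewrite card_bd_edges edge_bd_clique ?card_T //; lia.
Qed.
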